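(* Let $\alpha,\beta:\mathcal{X}\to\mathcal{Y}$ be two linear maps between vector spaces $\mathcal{X},\mathcal{Y}$ over $\mathbb{R}$. (1) If $\beta(\ker\alpha)\cap\mathrm{im}\,\alpha=\{0\}\subset\mathcal{Y}$, then a generic linear combination $\gamma$ of $\alpha$ and $\beta$ satisfies $\ker\gamma=\ker\alpha\cap\ker\beta$. (2) If $\beta^{\diamondsuit}(\ker\alpha^{\diamondsuit})\cap\mathrm{im}\,\alpha^{\diamondsuit}=\{0\}\subset\mathcal{X}^{\diamondsuit}$, or equivalently $\beta^{-1}(\mathrm{im}\,\alpha)+\ker\alpha=\mathcal{X}$, then a generic linear combination $\gamma$ of $\alpha$ and $\beta$ satisfies $\mathrm{im}\,\gamma=\mathrm{im}\,\alpha+\mathrm{im}\,\beta$.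
   Context: $(\cdot)^{\diamondsuit}$ denotes the dual vector space and dual (transpose) linear map. A generic linear combination of $\alpha$ and $\beta$ means $a\alpha+b\beta$ for $(a,b)$ in an open dense subset of $\mathbb{R}^2$. *)

From HB Require Import structures.
From mathcomp Require Import all_boot all_order all_algebra.
From mathcomp Require Import all_classical all_reals all_analysis.
Set Implicit Arguments. Unset Strict Implicit. Unset Printing Implicit Defensive.
Import Order.TTheory GRing.Theory Num.Theory.
Import numFieldNormedType.Exports.
Local Open Scope ring_scope.
Local Open Scope classical_set_scope.

Definition generic (R : realType) (P : R -> R -> Prop) : Prop :=
  exists S : set (R * R)%type, open S /\ dense S /\ forall a b, S (a, b) -> P a b.

Definition dualv (R : fieldType) (X : vectType R) := 'Hom(X, R^o).

Definition dualmap (R : fieldType) (X Y : vectType R) (f : 'Hom(X, Y))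
  : 'Hom(dualv Y, dualv X) :=
  linfun (fun phi : 'Hom(Y, R^o) => (phi \o f)%VF).

(* Call t != 0 bad if lker (alpha + t beta) is bigger than
   lker alpha :&: lker beta, and pick x_t in it with alpha x_t != 0, so that
   beta x_t = - t^-1 alpha x_t.  If sum_t k_t alpha x_t = 0, then
   z := sum_t k_t x_t lies in lker alpha while beta z = - sum_t k_t t^-1 alpha x_t
   lies in limg alpha; when beta (lker alpha) :&: limg alpha = 0 this forces
   beta z = 0.  Thus the relations among the alpha x_t are stable under
   multiplication by t^-1, hence by any polynomial in t^-1, and Lagrange
   interpolation shows the alpha x_t are linearly independent: there are at most
   dim Y bad ratios, and "a != 0 and b/a is not bad" is open dense in R^2.
   Part (2) is part (1) for the transposes, because lker gamma^T is the
   annihilator of limg gamma; both of its hypotheses say that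
   limg beta <= limg alpha + beta (lker alpha), the first one through
   annihilators. *)

From HB Require Import structures.
From mathcomp Require Import all_boot all_order all_algebra.
From mathcomp Require Import all_classical all_reals all_analysis.
Import Order.TTheory GRing.Theory Num.Theory.
Import numFieldNormedType.Exports.
Set Implicit Arguments. Unset Strict Implicit. Unset Printing Implicit Defensive.
Local Open Scope ring_scope.

Lemma finite_cover_of_uniq_size_le (T : eqType) (P : T -> Prop) (N : nat) :
  (forall s : seq T, uniq s -> (forall t, t \in s -> P t) -> (size s <= N)%N) ->
  exists F : seq T, forall t, P t -> t \in F.
Proof.
move=> size_le; apply: boolp.contrapT => no_cover.
have grow (s : seq T) : exists2 t, P t & t \notin s.
  apply: boolp.contrapT => no_new; apply: no_cover; exists s => t Pt.
  by apply: boolp.contrapT => /negP t_new; apply: no_new; exists t.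
have long n : exists s, [/\ uniq s, forall t, t \in s -> P t & size s = n].
  elim: n => [|n [s [s_uniq sP <-]]]; first by exists [::].
  have [t Pt t_new] := grow s; exists (t :: s); split => //=; first by rewrite t_new.
  by move=> u; rewrite inE => /predU1P[-> | /sP].
have [s [s_uniq sP s_size]] := long N.+1.
by have := size_le s s_uniq sP; rewrite s_size ltnn.
Qed.

Section MulStableRelations.
Variables (K : fieldType) (V : vectType K) (n : nat) (u : 'I_n -> V) (lam : 'I_n -> K).
Hypothesis relations_mul_stable :
  forall k : 'I_n -> K, \sum_i k i *: u i = 0 -> \sum_i (k i * lam i) *: u i = 0.

Lemma relations_horner_stable (p : {poly K}) (k : 'I_n -> K) :
  \sum_i k i *: u i = 0 -> \sum_i (k i * p.[lam i]) *: u i = 0.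
Proof.
elim/poly_ind: p k => [|p c IHp] k rel_k.
  by rewrite big1 // => i _; rewrite horner0 mulr0 scale0r.
under eq_bigr do rewrite hornerMXaddC mulrDr mulrA scalerDl (mulrC _ c) -(scalerA c).
by rewrite big_split /= -scaler_sumr rel_k scaler0 addr0 relations_mul_stable ?IHp.
Qed.

(* Evaluating the relation at the Lagrange-type polynomial vanishing at every
   [lam j], [j != i], isolates the coefficient of [u i]. *)
Lemma free_of_relations_mul_stable :
  injective lam -> (forall i, u i != 0) -> free [tuple u i | i < n].
Proof.
move=> lam_inj u_neq0; apply/freeP => k; under eq_bigr do rewrite nth_mktuple.
move=> rel_k i; pose p := \prod_(j | j != i) ('X - (lam j)%:P).
have p_root j : j != i -> p.[lam j] = 0.
  by move=> ji; rewrite horner_prod (bigD1 j) //= hornerXsubC subrr mul0r.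
have p_lam_i : p.[lam i] != 0.
  rewrite horner_prod; apply/prodf_neq0 => j ji.
  by rewrite hornerXsubC subr_eq0 (inj_eq lam_inj) eq_sym.
have := relations_horner_stable p rel_k.
rewrite (bigD1 i) //= big1 => [|j ji]; last by rewrite p_root // mulr0 scale0r.
rewrite addr0 => /eqP; rewrite scaler_eq0 mulf_eq0 (negbTE p_lam_i).
by rewrite (negbTE (u_neq0 i)) !orbF => /eqP.
Qed.

End MulStableRelations.

Lemma lkerZ (K : fieldType) (X Y : vectType K) (c : K) (f : 'Hom(X, Y)) :
  c != 0 -> lker (c *: f) = lker f.
Proof.
by move=> c_neq0; apply/vspaceP => v; rewrite !memv_ker lfunE /= scaler_eq0 (negbTE c_neq0).
Qed.

Section PencilKernel.
Variables (K : fieldType) (X Y : vectType K) (alpha beta : 'Hom(X, Y)).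

Lemma lker_pencil_witness (t : K) :
  t != 0 -> lker (alpha + t *: beta) != (lker alpha :&: lker beta)%VS ->
  exists2 v, alpha v + t *: beta v = 0 & alpha v != 0.
Proof.
move=> t_neq0 ker_neq.
have cap_sub : (lker alpha :&: lker beta <= lker (alpha + t *: beta)%R)%VS.
  apply/subvP => v; rewrite memv_cap !memv_ker !lfunE /= lfunE /=.
  by case/andP => /eqP-> /eqP->; rewrite scaler0 addr0.
have /subvPn[v] : ~~ (lker (alpha + t *: beta)%R <= lker alpha :&: lker beta)%VS.
  by apply: contra ker_neq => ker_sub; rewrite eqEsubv ker_sub cap_sub.
rewrite memv_ker !lfunE /= lfunE /= => /eqP pencil_v v_notin.
exists v => //; apply: contra v_notin => /eqP alpha_v.
move: pencil_v; rewrite alpha_v add0r => /eqP; rewrite scaler_eq0 (negbTE t_neq0) /=.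
by rewrite memv_cap !memv_ker alpha_v eqxx.
Qed.

Hypothesis beta_lker_cap_limg : (beta @: lker alpha :&: limg alpha = 0)%VS.

Lemma pencil_relations_mul_stable n (x : 'I_n -> X) (t : 'I_n -> K) :
  (forall i, t i != 0) -> (forall i, alpha (x i) + t i *: beta (x i) = 0) ->
  forall k, \sum_i k i *: alpha (x i) = 0 ->
    \sum_i (k i * (t i)^-1) *: alpha (x i) = 0.
Proof.
move=> t_neq0 pencil_x k rel_k.
have beta_x i : beta (x i) = - ((t i)^-1 *: alpha (x i)).
  move/eqP: (pencil_x i); rewrite addrC addr_eq0 => /eqP t_beta_x.
  by rewrite -[beta _](scalerK (t_neq0 i)) t_beta_x scalerN.
pose z := \sum_i k i *: x i.
have alpha_z : alpha z = 0.
  by rewrite linear_sum -[RHS]rel_k; apply: eq_bigr => i _; rewrite linearZ.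
have beta_z : beta z = - \sum_i (k i * (t i)^-1) *: alpha (x i).
  rewrite linear_sum -sumrN; apply: eq_bigr => i _.
  by rewrite linearZ /= beta_x scalerN scalerA.
have : beta z \in (beta @: lker alpha :&: limg alpha)%VS.
  rewrite memv_cap memv_img ?memv_ker ?alpha_z //= beta_z rpredN.
  by apply: rpred_sum => i _; rewrite rpredZ ?memv_img ?memvf.
by rewrite beta_lker_cap_limg memv0 beta_z oppr_eq0 => /eqP.
Qed.

Lemma pencil_bad_ratios_finite :
  exists F : seq K, forall t, t != 0 ->
    lker (alpha + t *: beta) != (lker alpha :&: lker beta)%VS -> t \in F.
Proof.
pose bad t := t != 0 /\ lker (alpha + t *: beta) != (lker alpha :&: lker beta)%VS.
have /boolp.choice[x x_witness] : forall t, exists v : X,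
    bad t -> alpha v + t *: beta v = 0 /\ alpha v != 0.
  move=> t; case: (boolp.pselect (bad t)) => [[t_neq0 ker_neq]|]; last by exists 0.
  by have [v ? ?] := lker_pencil_witness t_neq0 ker_neq; exists v.
have [F F_bad] : exists F : seq K, forall t, bad t -> t \in F.
  apply: (finite_cover_of_uniq_size_le (N := \dim {:Y})) => s s_uniq s_bad.
  pose t (i : 'I_(size s)) := s`_i.
  have t_bad i : bad (t i) by apply/s_bad/mem_nth.
  have t_inj : injective (fun i => (t i)^-1).
    by move=> i j /invr_inj /eqP; rewrite nth_uniq // => /eqP/val_inj.
  have /eqnP free_s := free_of_relations_mul_stable
    (pencil_relations_mul_stable (fun i => (t_bad i).1) (fun i => (x_witness _ (t_bad i)).1))
    t_inj (fun i => (x_witness _ (t_bad i)).2).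
  by rewrite size_tuple in free_s; rewrite -free_s dimvS ?subvf.
by exists F => t t_neq0 ker_neq; apply: F_bad.
Qed.

End PencilKernel.

Section Duality.
Variables (K : fieldType) (X Y : vectType K).

Definition lfun_precomp (Z : vectType K) (f : 'Hom(X, Y)) (phi : 'Hom(Y, Z)) :=
  (phi \o f)%VF.

Fact lfun_precomp_is_linear (Z : vectType K) (f : 'Hom(X, Y)) :
  linear (@lfun_precomp Z f).
Proof. by move=> c phi psi; rewrite /lfun_precomp comp_lfunDl comp_lfunZl. Qed.

HB.instance Definition _ Z f :=
  GRing.isLinear.Build K _ _ _ (@lfun_precomp Z f) (lfun_precomp_is_linear f).

Lemma dualmapE (f : 'Hom(X, Y)) (phi : dualv Y) : dualmap f phi = (phi \o f)%VF.
Proof. exact: (lfunE (lfun_precomp f)). Qed.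

Lemma dualmap_pencil (a b : K) (f g : 'Hom(X, Y)) :
  a *: dualmap f + b *: dualmap g = dualmap (a *: f + b *: g).
Proof.
apply/lfunP => phi; rewrite !lfunE /= !lfunE /= !dualmapE.
by rewrite comp_lfunDr -!comp_lfunZr.
Qed.

Lemma mem_lker_dualmap (f : 'Hom(X, Y)) (phi : dualv Y) :
  (phi \in lker (dualmap f)) = (limg f <= lker phi)%VS.
Proof.
rewrite memv_ker dualmapE; apply/eqP/subvP => [phi_f0 _ /memv_imgP[v _ ->] | img_sub].
  by rewrite memv_ker -comp_lfunE phi_f0 lfunE.
apply/lfunP => v; rewrite comp_lfunE lfunE; apply/eqP.
by rewrite -memv_ker img_sub ?memv_img ?memvf.
Qed.

Lemma limg_sub_lker_comp (Z : vectType K) (f : 'Hom(X, Y)) (phi : 'Hom(Y, Z))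
    (U : {vspace X}) :
  (f @: U <= lker phi)%VS = (U <= lker (phi \o f))%VS.
Proof. by rewrite !lkerE limg_comp. Qed.

Lemma comp_lfunVK_lker (Z : vectType K) (f : 'Hom(X, Y)) (g : 'Hom(X, Z)) :
  (lker f <= lker g)%VS -> (g \o f^-1 \o f)%VF = g.
Proof.
move=> /subvP ker_sub; apply/lfunP => v; rewrite !comp_lfunE; apply/eqP.
rewrite -subr_eq0 -linearB -memv_ker ker_sub // memv_ker linearB /=.
by rewrite limg_lfunVK ?memv_img ?memvf // subrr.
Qed.

Lemma mem_limg_dualmap (f : 'Hom(X, Y)) (chi : dualv X) :
  (chi \in limg (dualmap f)) = (lker f <= lker chi)%VS.
Proof.
apply/idP/idP => [/memv_imgP[psi _ ->] | ker_sub].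
  by apply/subvP => v; rewrite !memv_ker dualmapE comp_lfunE => /eqP->; rewrite linear0.
by rewrite -(comp_lfunVK_lker ker_sub) -dualmapE memv_img ?memvf.
Qed.

(* [v] survives the projection onto a complement of [W]; read off a nonzero
   coordinate of its image. *)
Lemma lfun_separate (W : {vspace Y}) (v : Y) :
  v \notin W -> exists2 phi : dualv Y, (W <= lker phi)%VS & phi v != 0.
Proof.
move=> v_notin; pose q : 'End(Y) := (\1 - projv W)%VF.
have qE y : q y = y - projv W y by rewrite !lfunE /= !lfunE.
have q_v : q v != 0.
  by rewrite qE subr_eq0; apply: contra v_notin => /eqP->; exact: memv_proj.
have /existsP[i coord_i] : [exists i, coord (vbasis fullv) i (q v) != 0].
  apply: contraNT q_v => /existsPn coord0; apply/eqP.
  rewrite (coord_vbasis (memvf (q v))) big1 // => i _.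
  by rewrite (eqP (negbNE (coord0 i))) scale0r.
exists (linfun (coord (vbasis fullv) i : Y -> K^o) \o q)%VF; last by rewrite comp_lfunE lfunE.
apply/subvP => w wW; rewrite memv_ker comp_lfunE lfunE /= qE projv_id // subrr.
by rewrite linear0.
Qed.

Lemma subv_annihilator (U W : {vspace Y}) :
  (forall phi : dualv Y, (W <= lker phi)%VS -> (U <= lker phi)%VS) -> (U <= W)%VS.
Proof.
move=> annihilated; apply/subvP => u uU; apply: boolp.contrapT => /negP u_notin.
have [phi W_sub phi_u] := lfun_separate u_notin.
by move/subvP: (annihilated phi W_sub) => /(_ u uU); rewrite memv_ker (negbTE phi_u).
Qed.

End Duality.

Section PencilImage.
Variables (K : fieldType) (X Y : vectType K) (alpha beta : 'Hom(X, Y)).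

Lemma dual_cap_eq0_limg_subv :
  ((dualmap beta @: lker (dualmap alpha)) :&: limg (dualmap alpha) = 0)%VS <->
  (limg beta <= limg alpha + beta @: lker alpha)%VS.
Proof.
have annihilates phi : (limg alpha + beta @: lker alpha <= lker phi)%VS =
    (phi \in lker (dualmap alpha)) && (dualmap beta phi \in limg (dualmap alpha)).
  by rewrite subv_add mem_lker_dualmap mem_limg_dualmap dualmapE (limg_sub_lker_comp beta).
split => [cap0 | beta_sub].
  apply: subv_annihilator => phi; rewrite annihilates => /andP[phi_ker beta_phi_img].
  have : dualmap beta phi \in (dualmap beta @: lker (dualmap alpha) :&: limg (dualmap alpha))%VS.
    by rewrite memv_cap memv_img.
  by rewrite cap0 memv0 -memv_ker mem_lker_dualmap.
apply/eqP; rewrite -subv0; apply/subvP => _ /memv_capP[/memv_imgP[phi phi_ker ->] chi_img].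
by rewrite memv0 -memv_ker mem_lker_dualmap (subv_trans beta_sub) // annihilates phi_ker.
Qed.

Lemma limg_subv_preim_add :
  (limg beta <= limg alpha + beta @: lker alpha)%VS =
  ((beta @^-1: limg alpha) + lker alpha == fullv)%VS.
Proof.
apply/idP/idP => [beta_sub | /eqP preim_full].
  rewrite eqEsubv subvf /=; apply/subvP => x _.
  have /memv_addP[_ /memv_imgP[u _ ->] [_ /memv_imgP[k k_ker ->] beta_x]] :
    beta x \in (limg alpha + beta @: lker alpha)%VS by rewrite (subvP beta_sub) ?memv_img ?memvf.
  rewrite -[x](subrK k) memv_add // -memv_preim linearB /= beta_x addrK.
  by rewrite memv_img ?memvf.
apply/subvP => _ /memv_imgP[x _ ->].
have /memv_addP[y y_preim [k k_ker ->]] : x \in ((beta @^-1: limg alpha) + lker alpha)%VS.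
  by rewrite preim_full memvf.
by rewrite linearD memv_add ?memv_img // memv_preim.
Qed.

Lemma limg_pencil_subv (a b : K) :
  (limg (a *: alpha + b *: beta)%R <= limg alpha + limg beta)%VS.
Proof.
apply/subvP => _ /memv_imgP[x _ ->]; rewrite !lfunE /= !lfunE /=.
by rewrite memv_add ?memvZ ?memv_img ?memvf.
Qed.

Lemma limg_pencil_eq (a b : K) :
  lker (dualmap (a *: alpha + b *: beta)) = (lker (dualmap alpha) :&: lker (dualmap beta))%VS ->
  limg (a *: alpha + b *: beta) = (limg alpha + limg beta)%VS.
Proof.
move=> ker_eq; apply/eqP; rewrite eqEsubv limg_pencil_subv /=.
apply: subv_annihilator => phi.
by rewrite -mem_lker_dualmap ker_eq memv_cap !mem_lker_dualmap subv_add.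
Qed.

End PencilImage.

Local Open Scope classical_set_scope.

Lemma dense_of_dense_slicesr (T U : topologicalType) (S : set (T * U)) :
  (forall x, dense [set y | S (x, y)]) -> dense S.
Proof.
move=> dS O [[x y] Oxy] oO.
have oOx : open [set y | O (x, y)].
  apply: (open_comp (f := fun y => (x, y))) => // z _.
  by apply: cvg_pair; [exact: cvg_cst | exact: cvg_id].
by have [y' [Oxy' Sxy']] := dS x _ (ex_intro _ y Oxy) oOx; exists (x, y').
Qed.

Lemma dense_of_dense_slicesl (T U : topologicalType) (S : set (T * U)) :
  (forall y, dense [set x | S (x, y)]) -> dense S.
Proof.
move=> dS O [[x y] Oxy] oO.
have oOy : open [set x | O (x, y)].
  apply: (open_comp (f := fun x => (x, y))) => // z _.
  by apply: cvg_pair; [exact: cvg_id | exact: cvg_cst].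
by have [x' [Ox'y Sx'y]] := dS y _ (ex_intro _ x Oxy) oOy; exists (x', y).
Qed.

Section Genericity.
Variable R : realType.

Lemma dense_neq (r : R) : dense [set x | x != r].
Proof.
have -> : [set x | x != r] = ~` [set r] by rewrite predeqE => x /=; split => /eqP.
exact: dense_set1C.
Qed.

Lemma open_dense_fst_neq0 :
  open [set z : R * R | z.1 != 0] /\ dense [set z : R * R | z.1 != 0].
Proof.
split; last by apply: dense_of_dense_slicesl => b; exact: (dense_neq 0).
have -> : [set z : R * R | z.1 != 0] = fst @^-1` [set x | x != 0] by [].
by apply: open_comp; [move=> z _; exact: cvg_fst | exact: open_neq].
Qed.

Lemma open_dense_off_line (t : R) :
  open [set z : R * R | z.2 != t * z.1] /\ dense [set z : R * R | z.2 != t * z.1].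
Proof.
split; last by apply: dense_of_dense_slicesr => a; exact: (dense_neq (t * a)).
have -> : [set z : R * R | z.2 != t * z.1] =
    (fun z : R * R => z.2 - t * z.1) @^-1` [set x | x != 0].
  by rewrite predeqE => z /=; rewrite subr_eq0.
apply: open_comp; last exact: open_neq.
move=> z _; apply: continuousB; first exact: cvg_snd.
by apply: continuousM; [exact: cvg_cst | exact: cvg_fst].
Qed.

Lemma generic_off_lines (F : seq R) (P : R -> R -> Prop) :
  (forall a b, a != 0 -> {in F, forall t, b != t * a} -> P a b) -> generic P.
Proof.
move=> HP.
pose S := [set z : R * R | (z.1 != 0) && all (fun t => z.2 != t * z.1) F].
suff [oS dS] : open S /\ dense S.
  by exists S; do 2!split=> //; move=> a b /andP[a0 /allP]; exact: HP.
rewrite {}/S; elim: F {HP} => [|t F [oS dS]].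
  by under eq_set do rewrite andbT; exact: open_dense_fst_neq0.
have [oL dL] := open_dense_off_line t.
have -> : [set z : R * R | (z.1 != 0) && all (fun s => z.2 != s * z.1) (t :: F)] =
    [set z | z.2 != t * z.1] `&` [set z | (z.1 != 0) && all (fun s => z.2 != s * z.1) F].
  by rewrite predeqE => z /=; rewrite andbCA; split => [/andP[]|[-> ->]].
by split; [exact: openI | exact: denseI].
Qed.

Lemma generic_mono (P Q : R -> R -> Prop) :
  (forall a b, P a b -> Q a b) -> generic P -> generic Q.
Proof. by move=> PQ [S [oS [dS SP]]]; exists S; do 2!split=> //; move=> a b /SP/PQ. Qed.

End Genericity.

Lemma generic_lker_pencil (R : realType) (X Y : vectType R) (alpha beta : 'Hom(X, Y)) :
  (beta @: lker alpha :&: limg alpha = 0)%VS ->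
  generic (fun a b : R => lker (a *: alpha + b *: beta) = (lker alpha :&: lker beta)%VS).
Proof.
move=> cap0; have [F bad_in_F] := pencil_bad_ratios_finite cap0.
apply: (@generic_off_lines _ (0 :: F)) => a b a_neq0 off_lines.
have ratio_neq0 : b / a != 0.
  by rewrite mulf_neq0 ?invr_eq0 //; have := off_lines 0 (mem_head _ _); rewrite mul0r.
have ratio_notin : b / a \notin F.
  by apply/negP => /(@mem_behead _ (0 :: F))/off_lines; rewrite divfK // eqxx.
have -> : a *: alpha + b *: beta = a *: (alpha + (b / a) *: beta).
  by rewrite scalerDr scalerA mulrC divfK.
rewrite lkerZ //; apply/eqP; apply: contraNT ratio_notin; exact: bad_in_F.
Qed.

Lemma generic_limg_pencil (R : realType) (X Y : vectType R) (alpha beta : 'Hom(X, Y)) :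
  ((dualmap beta @: lker (dualmap alpha)) :&: limg (dualmap alpha) = 0)%VS ->
  generic (fun a b : R => limg (a *: alpha + b *: beta) = (limg alpha + limg beta)%VS).
Proof.
move=> cap0; apply: generic_mono (generic_lker_pencil cap0) => a b ker_eq.
by apply: limg_pencil_eq; rewrite -dualmap_pencil.
Qed.

Theorem lemma6p1 (R : realType) (X Y : vectType R) (alpha beta : 'Hom(X, Y)) :
  (* (1) *)
  (((beta @: lker alpha) :&: limg alpha = 0)%VS ->
    generic (fun a b : R => lker (a *: alpha + b *: beta) = (lker alpha :&: lker beta)%VS))
  /\
  (* (2): the two hypotheses are equivalent, and imply the conclusion *)
  ((((dualmap beta @: lker (dualmap alpha)) :&: limg (dualmap alpha) = 0)%VS
     <-> ((beta @^-1: limg alpha) + lker alpha = fullv)%VS)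
   /\
   (((dualmap beta @: lker (dualmap alpha)) :&: limg (dualmap alpha) = 0)%VS ->
    generic (fun a b : R => limg (a *: alpha + b *: beta) = (limg alpha + limg beta)%VS))).
Proof.
split; first exact: generic_lker_pencil.
split; last exact: generic_limg_pencil.
by rewrite dual_cap_eq0_limg_subv limg_subv_preim_add; split => /eqP.
Qed.
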